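(* Let $\mathbf v\in\mathbb R_{<0}^{n\times m}$. There is a bijection $f\leftrightarrow G_f$ between the faces of the Pareto frontier of $\mathcal U(\mathbf v)$ and the set $\mathrm{MWW}(\mathbf v)$ such that, for every face $f$, an allocation $\mathbf z$ satisfies $\mathbf u(\mathbf z)\in f$ if and only if $G_{\mathbf z}$ is a subgraph of $G_f$.
   Context: Setup: agents $[n]$, chores $[m]$, allocations $\mathbf z\in\mathbb R^{n\times m}_{\ge0}$ with column sums $1$, $u_i(\mathbf z_i)=\sum_jv_{i,j}z_{i,j}$. $\mathcal U(\mathbf v)=\{\mathbf u(\mathbf z):\mathbf z\text{ allocation}\}\subset\mathbb R^n$ (a convex polytope). A face of the Pareto frontier is a set of the form $\arg\max_{\mathbf u\in\mathcal U(\mathbf v)}\langle\tau,\mathbf u\rangle$ for some $\tau\in\mathbb R^n_{>0}$. The consumption graph $G_{\mathbf z}$ has edge $(i,j)$ iff $z_{i,j}>0$. For $\tau\in\mathbb R^n_{>0}$, $G_\tau(\mathbf v)$ is the bipartite graph on $([n],[m])$ with edge $(i,j)$ iff $\tau_i|v_{i,j}|\le\tau_{i'}|v_{i',j}|$ for all $i'$; $\mathrm{MWW}(\mathbf v)=\{G_\tau(\mathbf v):\tau\in\mathbb R^n_{>0}\}$. *)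

(* Reals generalized to an arbitrary realFieldType R
   (the statement is purely linear/order-theoretic). *)
From HB Require Import structures.
From mathcomp Require Import all_boot all_order all_algebra.
Set Implicit Arguments. Unset Strict Implicit. Unset Printing Implicit Defensive.
Import Order.TTheory GRing.Theory Num.Theory.
Local Open Scope ring_scope.

(* Agents are 'I_n, chores are 'I_m; valuations v : 'M[R]_(n, m). *)

Definition allocation (R : realFieldType) (n m : nat) (z : 'M[R]_(n, m)) : Prop :=
  (forall i j, 0 <= z i j) /\ (forall j, \sum_(i < n) z i j = 1).

Definition util (R : realFieldType) (n m : nat) (v z : 'M[R]_(n, m)) : 'rV[R]_n :=
  \row_(i < n) \sum_(j < m) v i j * z i j.

Definition in_U (R : realFieldType) (n m : nat) (v : 'M[R]_(n, m)) (u : 'rV[R]_n) : Prop :=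
  exists z, allocation z /\ u = util v z.

Definition inner (R : realFieldType) (n : nat) (tau u : 'rV[R]_n) : R :=
  \sum_(i < n) tau 0 i * u 0 i.

Definition face_of (R : realFieldType) (n m : nat) (v : 'M[R]_(n, m)) (tau : 'rV[R]_n)
  : 'rV[R]_n -> Prop :=
  fun u => in_U v u /\ (forall u', in_U v u' -> inner tau u' <= inner tau u).

Definition is_face (R : realFieldType) (n m : nat) (v : 'M[R]_(n, m))
  (F : 'rV[R]_n -> Prop) : Prop :=
  exists tau : 'rV[R]_n, (forall i, 0 < tau 0 i) /\ F = face_of v tau.

(* bipartite graphs on ([n],[m]) are represented by their edge sets *)
Definition consumption_graph (R : realFieldType) (n m : nat) (z : 'M[R]_(n, m))
  : {set 'I_n * 'I_m} :=
  [set p | 0 < z p.1 p.2].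

Definition G_tau (R : realFieldType) (n m : nat) (v : 'M[R]_(n, m)) (tau : 'rV[R]_n)
  : {set 'I_n * 'I_m} :=
  [set p | [forall i' : 'I_n,
     tau 0 p.1 * `|v p.1 p.2| <= tau 0 i' * `|v i' p.2|]].

Definition in_MWW (R : realFieldType) (n m : nat) (v : 'M[R]_(n, m))
  (G : {set 'I_n * 'I_m}) : Prop :=
  exists tau : 'rV[R]_n, (forall i, 0 < tau 0 i) /\ G = G_tau v tau.

From HB Require Import structures.
From mathcomp Require Import all_boot all_order all_algebra.
From mathcomp Require Import ring boolp.
Set Implicit Arguments. Unset Strict Implicit. Unset Printing Implicit Defensive.
Import Order.TTheory GRing.Theory Num.Theory.
Local Open Scope ring_scope.

(* Fix weights tau and put w_ij = tau_i |v_ij|.  Since every v_ij < 0,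
   <tau, u(z)> = - sum_j sum_i w_ij z_ij, so maximising <tau, u> over U(v)
   means minimising the weighted cost of the chores.  Writing the cost as
   (sum_j min_i w_ij) plus a nonnegative excess, which vanishes for the
   allocation giving each chore to a minimiser, we get the key fact
   [face_graph]: u(z) lies in the face of tau iff G_z is a subgraph of
   G_tau.  The map face -> graph is then defined canonically, without
   choosing tau, as the union of the consumption graphs of allocations in
   the face ([face_support]); integral allocations show that this union is
   exactly G_tau ([face_support_G_tau]), while [face_graph] shows that the
   face is recovered from G_tau. *)

Definition assign (R : realFieldType) (n m : nat) (r : 'I_m -> 'I_n) : 'M[R]_(n, m) :=
  \matrix_(i, j) (i == r j)%:R.

Lemma assign_alloc (R : realFieldType) (n m : nat) (r : 'I_m -> 'I_n) :
  allocation (assign R r).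
Proof.
split=> [i j|j]; first by rewrite mxE ler0n.
rewrite (bigD1 (r j)) //= mxE eqxx big1 ?addr0 // => i /negbTE ri.
by rewrite mxE ri.
Qed.

Lemma assign_graph (R : realFieldType) (n m : nat) (r : 'I_m -> 'I_n) i j :
  ((i, j) \in consumption_graph (assign R r)) = (i == r j).
Proof. by rewrite inE mxE /=; case: eqP; rewrite ?ltr01 ?ltxx. Qed.

Section CostOfAFace.
Variables (R : realFieldType) (n m : nat) (v : 'M[R]_(n, m)).
Hypothesis v_neg : forall i j, v i j < 0.
Variable tau : 'rV[R]_n.

Definition weight i j := tau 0 i * `|v i j|.

Lemma G_tauP i j :
  reflect (forall i', weight i j <= weight i' j) ((i, j) \in G_tau v tau).
Proof. by rewrite inE; apply: forallP. Qed.

Lemma inner_util z :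
  inner tau (util v z) = - \sum_(j < m) \sum_(i < n) weight i j * z i j.
Proof.
rewrite /inner exchange_big -sumrN; apply: eq_bigr => i _.
rewrite mxE mulr_sumr -sumrN; apply: eq_bigr => j _.
by rewrite /weight ltr0_norm //; ring.
Qed.

Section Minimisers.
Variable x0 : 'I_n.

Definition kmin (j : 'I_m) : 'I_n := Order.arg_min x0 xpredT (fun i => weight i j).

Lemma kmin_G_tau j : (kmin j, j) \in G_tau v tau.
Proof. by apply/G_tauP => i; rewrite /kmin; case: arg_minP => // k _; apply. Qed.

Definition excess (z : 'M[R]_(n, m)) :=
  \sum_(j < m) \sum_(i < n) (weight i j - weight (kmin j) j) * z i j.

Lemma cost_excess z : allocation z ->
  \sum_(j < m) \sum_(i < n) weight i j * z i j
    = excess z + \sum_(j < m) weight (kmin j) j.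
Proof.
case=> _ z_col; rewrite /excess -big_split /=; apply: eq_bigr => j _.
rewrite -[X in _ + X]mulr1 -(z_col j) mulr_sumr -big_split /=.
by apply: eq_bigr => i _; ring.
Qed.

Lemma excess_term_ge0 z : allocation z ->
  forall i j, 0 <= (weight i j - weight (kmin j) j) * z i j.
Proof.
case=> z_ge0 _ i j; rewrite mulr_ge0 // subr_ge0.
exact: G_tauP (kmin_G_tau j) i.
Qed.

Lemma excess_ge0 z : allocation z -> 0 <= excess z.
Proof.
move=> hz; apply: sumr_ge0 => j _; apply: sumr_ge0 => i _.
exact: excess_term_ge0.
Qed.

Lemma excess_eq0_graph z : allocation z ->
  excess z = 0 <-> consumption_graph z \subset G_tau v tau.
Proof.
move=> hz; have [z_ge0 _] := hz; split.
- move=> ex0; apply/subsetP => -[i j]; rewrite inE /= => zij_gt0.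
  have col0 : \sum_(i < n) (weight i j - weight (kmin j) j) * z i j = 0.
    apply: (psumr_eq0P _ ex0) => // j' _.
    by apply: sumr_ge0 => i' _; apply: excess_term_ge0.
  have /eqP : (weight i j - weight (kmin j) j) * z i j = 0.
    by apply: (psumr_eq0P _ col0) => // i' _; apply: excess_term_ge0.
  rewrite mulf_eq0 (gt_eqF zij_gt0) orbF subr_eq0 => /eqP w_min.
  by apply/G_tauP => i'; rewrite w_min; apply: G_tauP (kmin_G_tau j) i'.
- move/subsetP => Gz_sub; apply: big1 => j _; apply: big1 => i _.
  have := z_ge0 i j; rewrite le_eqVlt => /predU1P [<-|zij_gt0].
    by rewrite mulr0.
  have /Gz_sub/G_tauP/(_ (kmin j)) w_le : (i, j) \in consumption_graph z.
    by rewrite inE.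
  have w_ge := G_tauP _ _ (kmin_G_tau j) i.
  by rewrite (@le_anti _ _ (weight i j) (weight (kmin j) j)) ?w_le ?w_ge // subrr mul0r.
Qed.

Lemma face_excess z : allocation z -> face_of v tau (util v z) <-> excess z = 0.
Proof.
move=> hz; have hstar := assign_alloc R kmin.
have ex_star : excess (assign R kmin) = 0.
  apply/(excess_eq0_graph hstar)/subsetP => -[i j].
  by rewrite assign_graph => /eqP ->; apply: kmin_G_tau.
split.
- case=> _ /(_ _ (ex_intro _ _ (conj hstar erefl))).
  rewrite !inner_util !cost_excess // ex_star lerN2 lerD2r => ex_le0.
  by apply/eqP; rewrite eq_le ex_le0 excess_ge0.
- move=> ex0; split; first by exists z.
  move=> _ [z' [hz' ->]]; rewrite !inner_util !cost_excess // lerN2 lerD2r ex0.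
  exact: excess_ge0.
Qed.

End Minimisers.

Lemma face_graph z : allocation z ->
  face_of v tau (util v z) <-> consumption_graph z \subset G_tau v tau.
Proof.
move=> hz; have [n0|n_gt0] := posnP n; last first.
  by rewrite (face_excess (Ordinal n_gt0) hz); apply: excess_eq0_graph.
have no_agent (i : 'I_n) : False by case: i; rewrite n0.
split=> _; first by apply/subsetP => -[i]; case: (no_agent i).
split=> [|u' _]; first by exists z.
by rewrite /inner !big1 // => i; case: (no_agent i).
Qed.

Lemma face_of_graph :
  face_of v tau = fun u => exists z, [/\ allocation z, u = util v z &
                                         consumption_graph z \subset G_tau v tau].
Proof.
apply/funext => u; apply/propext; split.
- move=> hu; have [z [hz eu]] := hu.1.
  by exists z; split=> //; apply/(face_graph hz); rewrite -eu.
- by case=> z [hz -> Gz_sub]; apply/(face_graph hz).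
Qed.

End CostOfAFace.

Definition face_support (R : realFieldType) (n m : nat) (v : 'M[R]_(n, m))
  (F : 'rV[R]_n -> Prop) : {set 'I_n * 'I_m} :=
  [set p | `[< exists z, [/\ allocation z, F (util v z) & 0 < z p.1 p.2] >]].

Lemma face_support_G_tau (R : realFieldType) (n m : nat) (v : 'M[R]_(n, m))
  (v_neg : forall i j, v i j < 0) (tau : 'rV[R]_n) :
  face_support v (face_of v tau) = G_tau v tau.
Proof.
apply/setP => -[i j]; rewrite inE /=; apply/asboolP/idP.
- case=> z [hz /(face_graph v_neg tau hz) /subsetP Gz_sub zij_gt0].
  by apply: Gz_sub; rewrite inE.
- move=> ij_G.
  pose r j' := if j' == j then i else kmin v tau i j'.
  have hr := assign_alloc R r.
  exists (assign R r); split=> //; last by rewrite mxE /r eqxx eqxx ltr01.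
  apply/(face_graph v_neg tau hr)/subsetP => -[i' j'].
  rewrite assign_graph /r => /eqP ->.
  by case: eqP => [->|_] //; apply: kmin_G_tau.
Qed.

Theorem lemma1 (R : realFieldType) (n m : nat) (v : 'M[R]_(n, m))
  (hv : forall i j, v i j < 0) :
  exists Gf : ('rV[R]_n -> Prop) -> {set 'I_n * 'I_m},
    (forall F, is_face v F -> in_MWW v (Gf F)) /\
    (forall F1 F2, is_face v F1 -> is_face v F2 -> Gf F1 = Gf F2 -> F1 = F2) /\
    (forall G, in_MWW v G -> exists F, is_face v F /\ Gf F = G) /\
    (forall F, is_face v F -> forall z : 'M[R]_(n, m), allocation z ->
       (F (util v z) <-> consumption_graph z \subset Gf F)).
Proof.
have supportE := face_support_G_tau hv.
exists (face_support v); split; [|split; [|split]].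
- by move=> _ [tau [tau_gt0 ->]]; exists tau; rewrite supportE.
- move=> _ _ [tau1 [_ ->]] [tau2 [_ ->]].
  by rewrite !supportE !(face_of_graph hv) => ->.
- move=> _ [tau [tau_gt0 ->]]; exists (face_of v tau).
  by split; [exists tau | rewrite supportE].
- by move=> _ [tau [_ ->]] z hz; rewrite supportE; apply: face_graph.
Qed.
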